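(* Let $M$ be a Rickart right $R$-module. If $M$ is reduced, or rigid, or abelian, or semicommutative, or symmetric, then $M$ is a centrally endo-AIP module.
   Context: Let $S=\mathrm{End}_R(M)$. $M$ is Rickart if $\ker\phi$ is a direct summand of $M$ for every $\phi\in S$. $M$ is reduced if for $\phi\in S$, $m\in M$, $\phi^2(m)=0$ implies $\phi(Sm)=0$ (equivalently $\phi(m)=0$ implies $\mathrm{Im}(\phi)\cap Sm=0$). $M$ is rigid if $\psi^2(m)=0$ implies $\psi(m)=0$ for all $\psi\in S$, $m\in M$. $M$ is abelian if every idempotent of $S$ is central. $M$ is semicommutative if $\psi(m)=0$ implies $\psi(Sm)=0$. $M$ is symmetric if $\phi\psi(m)=0$ implies $\psi\phi(m)=0$ for all $\phi,\psi\in S$, $m\in M$. For $N\le M$, $l_S(N)=\{\phi\in S:\phi(N)=0\}$. An ideal $I$ of $S$ is centrally s-unital if for every $a\in I$ there is $z\in I$ central in $S$ with $az=a$. $M$ is centrally endo-AIP if $l_S(N)$ is a centrally s-unital ideal of $S$ for every fully invariant submodule $N$ of $M$. *)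

From HB Require Import structures.
From mathcomp Require Import all_boot all_order all_algebra.
Set Implicit Arguments. Unset Strict Implicit. Unset Printing Implicit Defensive.
Import GRing.Theory.
Local Open Scope ring_scope.

(* A right R-module is modelled as a left module over the converse ring R^c.
   Endomorphisms are written on the left; S = End_R(M) is the set of linear
   maps M -> M, with product = composition. *)

Section ModuleDefs.
Variable (R : pzRingType) (M : lmodType R^c).

Definition endo (f : M -> M) : Prop := linear f.

Definition submodule (N : M -> Prop) : Prop :=
  [/\ N 0, (forall x y, N x -> N y -> N (x + y)) &
      (forall (r : R^c) x, N x -> N (r *: x))].

Definition kernel (f : M -> M) : M -> Prop := fun m => f m = 0.

Definition direct_summand (N : M -> Prop) : Prop :=
  submodule N /\
  exists K : M -> Prop, [/\ submodule K,
     (forall m, N m -> K m -> m = 0) &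
     (forall m, exists a b, [/\ N a, K b & m = a + b])].

Definition rickart : Prop :=
  forall phi, endo phi -> direct_summand (kernel phi).

Definition reduced_mod : Prop :=
  forall phi m, endo phi -> phi (phi m) = 0 ->
    forall psi, endo psi -> phi (psi m) = 0.

Definition rigid : Prop :=
  forall psi m, endo psi -> psi (psi m) = 0 -> psi m = 0.

Definition central_endo (z : M -> M) : Prop :=
  forall f, endo f -> forall x, z (f x) = f (z x).

Definition abelian_mod : Prop :=
  forall e, endo e -> (forall x, e (e x) = e x) -> central_endo e.

Definition semicommutative : Prop :=
  forall psi m, endo psi -> psi m = 0 ->
    forall phi, endo phi -> psi (phi m) = 0.

Definition symmetric_mod : Prop :=
  forall phi psi m, endo phi -> endo psi -> phi (psi m) = 0 -> psi (phi m) = 0.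

Definition fully_invariant (N : M -> Prop) : Prop :=
  submodule N /\ forall phi, endo phi -> forall n, N n -> N (phi n).

Definition lann (N : M -> Prop) : (M -> M) -> Prop :=
  fun phi => endo phi /\ forall n, N n -> phi n = 0.

Definition endo_ideal (I : (M -> M) -> Prop) : Prop :=
  [/\ (forall a, I a -> endo a),
      I (fun _ => 0),
      (forall a b, I a -> I b -> I (fun x => a x - b x)),
      (forall a phi, I a -> endo phi -> I (fun x => phi (a x))) &
      (forall a phi, I a -> endo phi -> I (fun x => a (phi x)))].

Definition centrally_s_unital (I : (M -> M) -> Prop) : Prop :=
  endo_ideal I /\
  forall a, I a -> exists z, [/\ I z, central_endo z & forall x, a (z x) = a x].

Definition centrally_endo_AIP : Prop :=
  forall N, fully_invariant N -> centrally_s_unital (lann N).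

End ModuleDefs.

From mathcomp Require Import all_boot all_order all_algebra.
From Stdlib Require Import ClassicalEpsilon.
Set Implicit Arguments. Unset Strict Implicit. Unset Printing Implicit Defensive.
Import GRing.Theory.
Local Open Scope ring_scope.

(* Since M is Rickart, the kernel of any a in S is a direct summand, so the
   projection e of M onto ker a along a complement is an idempotent of S with
   a e = 0 and e = 1 on ker a; hence z := 1 - e satisfies a z = a and kills
   every submodule annihilated by a.  It remains to see that z is central,
   i.e. that M is abelian.  Each of the other four conditions makes every
   idempotent e left semicentral (e f e = f e for all f in S); applying this
   to both e and 1 - e gives e f (1 - e) = 0 and e f e = f e, so e f = f e. *)

Section Endomorphisms.
Variables (R : pzRingType) (M : lmodType R^c).

Implicit Types (f g e a : M -> M).

Lemma endoD f : endo f -> forall u v, f (u + v) = f u + f v.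
Proof. by move=> hf u v; have := hf 1 u v; rewrite !scale1r. Qed.

Lemma endo0 f : endo f -> f 0 = 0.
Proof. by move=> hf; apply: (addrI (f 0)); rewrite -endoD // !addr0. Qed.

Lemma endoZ f : endo f -> forall (r : R^c) u, f (r *: u) = r *: f u.
Proof. by move=> hf r u; have := hf r u 0; rewrite !addr0 endo0 // addr0. Qed.

Lemma endoN f : endo f -> forall u, f (- u) = - f u.
Proof. by move=> hf u; rewrite -scaleN1r endoZ // scaleN1r. Qed.

Lemma endoB f : endo f -> forall u v, f (u - v) = f u - f v.
Proof. by move=> hf u v; rewrite endoD // endoN. Qed.

Lemma endo_id : endo (@id M).
Proof. by []. Qed.

Lemma endo_zero : endo (fun _ : M => 0).
Proof. by move=> r u v; rewrite scaler0 addr0. Qed.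

Lemma endo_comp f g : endo f -> endo g -> endo (fun x => f (g x)).
Proof. by move=> hf hg r u v; rewrite hg hf. Qed.

Lemma endo_sub f g : endo f -> endo g -> endo (fun x => f x - g x).
Proof. by move=> hf hg r u v; rewrite hf hg scalerBr opprD addrACA. Qed.

Definition idempotent_endo e := endo e /\ forall x, e (e x) = e x.

Lemma idempotent_endo_compl e :
  idempotent_endo e -> idempotent_endo (fun x => x - e x).
Proof.
move=> [he eK]; split; first exact: endo_sub endo_id he.
by move=> x; rewrite endoB // eK subrr subr0.
Qed.

Definition idempotents_left_semicentral :=
  forall e, idempotent_endo e -> forall f, endo f -> forall y, e (f (e y)) = f (e y).

Lemma left_semicentral_abelian : idempotents_left_semicentral -> abelian_mod M.
Proof.
move=> hsc e he eK f hf y.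
have eidem : idempotent_endo e := conj he eK.
have e_f_compl : e (f (y - e y)) = 0.
  have /= /eqP := hsc _ (idempotent_endo_compl eidem) f hf y.
  by rewrite -subr_eq0 addrAC subrr add0r oppr_eq0 => /eqP.
have -> : f y = f (e y) + f (y - e y) by rewrite -endoD // addrC subrK.
by rewrite endoD // e_f_compl addr0 hsc.
Qed.

Lemma reduced_semicommutative : reduced_mod M -> semicommutative M.
Proof.
by move=> hr psi m hpsi hm phi hphi; apply: (hr psi m) => //; rewrite hm endo0.
Qed.

Lemma semicommutative_left_semicentral :
  semicommutative M -> idempotents_left_semicentral.
Proof.
move=> hs e eidem f hf y; have hc := (idempotent_endo_compl eidem).1.
have := hs _ (e y) hc; rewrite /= eidem.2 subrr => /(_ erefl f hf)/eqP.
by rewrite subr_eq0 => /eqP.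
Qed.

Lemma symmetric_left_semicentral :
  symmetric_mod M -> idempotents_left_semicentral.
Proof.
move=> hs e eidem f hf y; have hc := (idempotent_endo_compl eidem).1.
have := hs f _ (e y) hf hc; rewrite /= eidem.2 subrr (endo0 hf) => /(_ erefl)/eqP.
by rewrite subr_eq0 => /eqP.
Qed.

(* g := (1 - e) f e satisfies g^2 = 0, because e g = 0. *)
Lemma rigid_left_semicentral : rigid M -> idempotents_left_semicentral.
Proof.
move=> hr e [he eK] f hf y.
pose g x := f (e x) - e (f (e x)).
have hg : endo g.
  exact: endo_sub (endo_comp hf he) (endo_comp he (endo_comp hf he)).
have e_g x : e (g x) = 0 by rewrite endoB // eK subrr.
have := hr g y hg; rewrite {1}/g e_g (endo0 hf) (endo0 he) subrr => /(_ erefl)/eqP.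
by rewrite subr_eq0 => /eqP.
Qed.

Lemma direct_summand_retraction (N : M -> Prop) : direct_summand N ->
  exists e, [/\ endo e, forall m, N (e m) & forall n, N n -> e n = n].
Proof.
move=> [[_ ND NZ] [K [[K0 KD KZ] NK0 NK]]].
have NN x : N x -> N (- x) by rewrite -scaleN1r; apply: NZ.
have KN x : K x -> K (- x) by rewrite -scaleN1r; apply: KZ.
have pick m : {p | N p /\ K (m - p)}.
  apply: constructive_indefinite_description.
  by have [p [q [Np Kq ->]]] := NK m; exists p; rewrite addrAC subrr add0r.
pose e m := sval (pick m).
have eN m : N (e m) by rewrite /e; case: (pick m) => p [].
have eK m : K (m - e m) by rewrite /e; case: (pick m) => p [].
have e_uniq m p : N p -> K (m - p) -> e m = p.
  move=> Np Kp; apply: subr0_eq; apply: NK0; first by apply: ND => //; apply: NN.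
  have -> : e m - p = (m - p) - (m - e m) by rewrite opprB [RHS]addrC addrA subrK.
  by apply: KD => //; apply: KN.
exists e; split=> // [r u v|n Nn]; last by apply: e_uniq; rewrite ?subrr.
apply: e_uniq; first by apply: ND; [apply: NZ |]; apply: eN.
have -> : r *: u + v - (r *: e u + e v) = r *: (u - e u) + (v - e v).
  by rewrite scalerBr opprD addrACA.
by apply: KD; [apply: KZ |]; apply: eK.
Qed.

Lemma lann_endo_ideal (N : M -> Prop) : fully_invariant N -> endo_ideal (lann N).
Proof.
move=> [_ Ninv]; split.
- by move=> a [].
- by split=> //; exact: endo_zero.
- move=> a b [ha aN] [hb bN]; split; first exact: endo_sub.
  by move=> n Nn; rewrite aN // bN // subrr.
- move=> a phi [ha aN] hphi; split; first exact: endo_comp.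
  by move=> n Nn; rewrite aN // endo0.
- move=> a phi [ha aN] hphi; split; first exact: endo_comp.
  by move=> n Nn; apply: aN; exact: Ninv.
Qed.

Lemma rickart_abelian_central_unit a : rickart M -> abelian_mod M -> endo a ->
  exists z, [/\ endo z, central_endo z, (forall m, a m = 0 -> z m = 0)
              & forall x, a (z x) = a x].
Proof.
move=> hric hab ha.
have [e [he a_e efix]] := direct_summand_retraction (hric a ha).
have eK x : e (e x) = e x by apply: efix.
exists (fun x => x - e x); split.
- exact: endo_sub endo_id he.
- by move=> f hf x /=; rewrite (hab e he eK f hf) endoB.
- by move=> m am0; rewrite efix ?subrr.
- by move=> x; rewrite endoB // a_e subr0.
Qed.

Lemma rickart_abelian_centrally_endo_AIP :
  rickart M -> abelian_mod M -> centrally_endo_AIP M.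
Proof.
move=> hric hab N NFI; split; first exact: lann_endo_ideal.
move=> a [ha aN].
have [z [hz zc z_ker az]] := rickart_abelian_central_unit hric hab ha.
by exists z; split=> //; split=> // n Nn; apply/z_ker/aN.
Qed.

End Endomorphisms.

Theorem corollary2p3 (R : pzRingType) (M : lmodType R^c) :
  rickart M ->
  reduced_mod M \/ rigid M \/ abelian_mod M \/ semicommutative M \/ symmetric_mod M ->
  centrally_endo_AIP M.
Proof.
move=> hric hcond; apply: rickart_abelian_centrally_endo_AIP => //.
case: hcond => [h|[h|[h|[h|h]]]] //; apply: left_semicentral_abelian.
- exact/semicommutative_left_semicentral/reduced_semicommutative.
- exact: rigid_left_semicentral.
- exact: semicommutative_left_semicentral.
- exact: symmetric_left_semicentral.
Qed.
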